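(* Let $(X,d_X)$ be a proper, doubling metric space, $p\in X$, and let $\eta:[0,\infty)\to[0,\infty)$ be a homeomorphism. Assume there is a sequence of points $p_n\in X$ with $p_n\to p$ such that $X$ is $\eta$-self-quasisymmetric at $p_n$ for every $n$. Then there exists a weak tangent $T_pX\in WT_p(X)$ such that $X$ is $\eta'$-quasisymmetrically embedded into $T_pX$, where $\eta'(t)=1/\eta^{-1}(1/t)$.
   Context: A homeomorphism $f:X\to Y$ between metric spaces is $\eta$-quasisymmetric if $d_Y(f(x),f(y))/d_Y(f(x),f(z))\le \eta(d_X(x,y)/d_X(x,z))$ for all $x,y,z\in X$ with $x\ne z$; an $\eta$-quasisymmetric embedding is an $\eta$-quasisymmetric homeomorphism onto its image. $X$ is $\eta$-self-quasisymmetric at a point $x$ if there is $r_x>0$ such that for every $0<r<r_x$ there exists a subset $U\subset B(x,r)$ and an $\eta$-quasisymmetric homeomorphism from $U$ onto $X$. Proper: closed balls are compact. Doubling: there is $C\ge1$ such that every subset of diameter $d$ is covered by at most $C$ subsets of diameter at most $d/2$. Pointed Gromov–Hausdorff convergence $(X_n,p_n,d_n)\to(Z,z,d)$ ($Z$ complete): for every $r,\varepsilon>0$ there is $n_0$ such that for all $n>n_0$ there is a map $g:B(p_n,r)\to Z$ with $g(p_n)=z$, $\sup_{x,y}|d_n(x,y)-d(g(x),g(y))|<\varepsilon$, and $B(z,r-\varepsilon)$ contained in the $\varepsilon$-neighborhood of $g(B(p_n,r))$. A weak tangent of $X$ at $p$ is a pointed Gromov–Hausdorff limit $(T_pX,p_\infty,g_p)$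 of $(X,q_n,d_X/\lambda_n)$ with $\lambda_n>0$, $\lambda_n\to0$ and $q_n\to p$; $WT_p(X)$ is the set of these. *)

From Stdlib Require Import Reals List.
Open Scope R_scope.

Record is_metric {X : Type} (d : X -> X -> R) : Prop := {
  met_nonneg : forall x y, 0 <= d x y;
  met_sep : forall x y, d x y = 0 <-> x = y;
  met_sym : forall x y, d x y = d y x;
  met_tri : forall x y z, d x z <= d x y + d y z }.

Definition is_open {X : Type} (d : X -> X -> R) (U : X -> Prop) : Prop :=
  forall x, U x -> exists e, 0 < e /\ forall y, d x y < e -> U y.

Definition is_compact {X : Type} (d : X -> X -> R) (K : X -> Prop) : Prop :=
  forall (I : Type) (U : I -> X -> Prop),
    (forall i, is_open d (U i)) ->
    (forall x, K x -> exists i, U i x) ->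
    exists l : list I, forall x, K x -> exists i, In i l /\ U i x.

Definition is_proper {X : Type} (d : X -> X -> R) : Prop :=
  forall x r, is_compact d (fun y => d x y <= r).

Definition is_doubling {X : Type} (d : X -> X -> R) : Prop :=
  exists C : nat, (1 <= C)%nat /\
    forall (A : X -> Prop) (r : R), 0 <= r ->
      (forall x y, A x -> A y -> d x y <= r) ->
      exists B : nat -> X -> Prop,
        (forall i, (i < C)%nat -> forall x y, B i x -> B i y -> d x y <= r / 2) /\
        (forall x, A x -> exists i, (i < C)%nat /\ B i x).

Definition seq_conv {X : Type} (d : X -> X -> R) (u : nat -> X) (l : X) : Prop :=
  forall e, 0 < e -> exists N, forall n, (N <= n)%nat -> d (u n) l < e.

Definition is_cauchy {X : Type} (d : X -> X -> R) (u : nat -> X) : Prop :=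
  forall e, 0 < e -> exists N, forall m n, (N <= m)%nat -> (N <= n)%nat -> d (u m) (u n) < e.

Definition is_complete {X : Type} (d : X -> X -> R) : Prop :=
  forall u, is_cauchy d u -> exists l, seq_conv d u l.

Definition mcontinuous {X Y : Type} (dX : X -> X -> R) (dY : Y -> Y -> R) (f : X -> Y) : Prop :=
  forall x e, 0 < e -> exists delta, 0 < delta /\
    forall y, dX x y < delta -> dY (f x) (f y) < e.

Definition homeo_onto_image {X Y : Type} (dX : X -> X -> R) (dY : Y -> Y -> R) (f : X -> Y) : Prop :=
  (forall x y, f x = f y -> x = y) /\
  mcontinuous dX dY f /\
  (forall x e, 0 < e -> exists delta, 0 < delta /\
     forall y, dY (f x) (f y) < delta -> dX x y < e).

Definition qs_inequality {X Y : Type} (dX : X -> X -> R) (dY : Y -> Y -> R)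
  (eta : R -> R) (f : X -> Y) : Prop :=
  forall x y z, x <> z ->
    dY (f x) (f y) / dY (f x) (f z) <= eta (dX x y / dX x z).

Definition qs_embedding {X Y : Type} (dX : X -> X -> R) (dY : Y -> Y -> R)
  (eta : R -> R) (f : X -> Y) : Prop :=
  homeo_onto_image dX dY f /\ qs_inequality dX dY eta f.

Definition qs_homeomorphism {X Y : Type} (dX : X -> X -> R) (dY : Y -> Y -> R)
  (eta : R -> R) (f : X -> Y) : Prop :=
  qs_embedding dX dY eta f /\ (forall y, exists x, f x = y).

Definition restr_dist {X : Type} (d : X -> X -> R) (U : X -> Prop) :
  {u : X | U u} -> {u : X | U u} -> R :=
  fun a b => d (proj1_sig a) (proj1_sig b).

Definition self_qs_at {X : Type} (d : X -> X -> R) (eta : R -> R) (x : X) : Prop :=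
  exists rx, 0 < rx /\
    forall r, 0 < r < rx ->
      exists U : X -> Prop, (forall u, U u -> d x u < r) /\
        exists g : {u : X | U u} -> X, qs_homeomorphism (restr_dist d U) d eta g.

Definition cont_on_nonneg (f : R -> R) : Prop :=
  forall t e, 0 <= t -> 0 < e -> exists delta, 0 < delta /\
    forall s, 0 <= s -> Rabs (s - t) < delta -> Rabs (f s - f t) < e.

Definition homeo_nonneg_pair (eta etainv : R -> R) : Prop :=
  (forall t, 0 <= t -> 0 <= eta t) /\
  (forall t, 0 <= t -> 0 <= etainv t) /\
  (forall t, 0 <= t -> etainv (eta t) = t) /\
  (forall t, 0 <= t -> eta (etainv t) = t) /\
  cont_on_nonneg eta /\ cont_on_nonneg etainv.

(** eta'(t) = 1 / etainv (1/t), extended by eta'(0) = 0 (its limit). *)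
Definition eta_prime (etainv : R -> R) (t : R) : R :=
  if Req_EM_T t 0 then 0 else 1 / etainv (1 / t).

Definition pGH_conv {X Z : Type} (dn : nat -> X -> X -> R) (pn : nat -> X)
  (dZ : Z -> Z -> R) (z : Z) : Prop :=
  forall r eps, 0 < r -> 0 < eps ->
    exists n0, forall n, (n0 < n)%nat ->
      exists g : X -> Z, g (pn n) = z /\
        (exists s, s < eps /\ forall x y, dn n (pn n) x < r -> dn n (pn n) y < r ->
            Rabs (dn n x y - dZ (g x) (g y)) <= s) /\
        (forall w, dZ z w < r - eps ->
            exists x, dn n (pn n) x < r /\ dZ w (g x) < eps).

Definition weak_tangent {X Z : Type} (d : X -> X -> R) (p : X)
  (dZ : Z -> Z -> R) (z : Z) : Prop :=
  is_metric dZ /\ is_complete dZ /\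
  exists (lam : nat -> R) (q : nat -> X),
    (forall n, 0 < lam n) /\ seq_conv (fun a b => Rabs (a - b)) lam 0 /\
    seq_conv d q p /\
    pGH_conv (fun n x y => d x y / lam n) q dZ z.

(* Inverting the self-quasisymmetric maps at p_n gives injective eta'-quasisymmetric maps h_n
   of X into the balls B(p_n, 2^-n).  Fix a <> b, rescale by lam_n = d(h_n a, h_n b) -> 0 and
   take the ultralimit Z of (X, h_n a, d / lam_n) along a free ultrafilter.  Z is complete, and
   as X is doubling the bounded balls of Z are totally bounded, so along a subsequence the
   rescaled spaces converge to Z in the pointed Gromov-Hausdorff sense: Z is a weak tangent at
   p.  The quasisymmetry inequalities of the h_n pass to the limit map x |-> [(h_n x)_n]; used
   for the triples (x, a, z) and (x, b, z) they also give d(h_n x, h_n z) >= c lam_n with c > 0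
   independent of n, so the limit map is injective, hence an eta'-quasisymmetric embedding. *)

From Stdlib Require Import Reals Lra Lia Classical ClassicalEpsilon
  FunctionalExtensionality PropExtensionality ProofIrrelevance.
From mathcomp Require filter.
Open Scope R_scope.

Lemma Rdiv_le_0_compat a b : 0 <= a -> 0 < b -> 0 <= a / b.
Proof. intros; apply Rle_mult_inv_pos; assumption. Qed.

Lemma Rdiv_le_iff a b c : 0 < b -> (a / b <= c <-> a <= c * b).
Proof.
  intros Hb; unfold Rdiv; split; intros H.
  - apply (Rmult_le_compat_r b) in H; [|lra].
    rewrite Rmult_assoc, Rinv_l, Rmult_1_r in H; lra.
  - apply (Rmult_le_reg_r b); [lra|]. rewrite Rmult_assoc, Rinv_l, Rmult_1_r; lra.
Qed.

Lemma Rdiv_lt_iff a b c : 0 < b -> (a / b < c <-> a < c * b).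
Proof.
  intros Hb; unfold Rdiv; split; intros H.
  - apply (Rmult_lt_compat_r b) in H; [|lra].
    rewrite Rmult_assoc, Rinv_l, Rmult_1_r in H; lra.
  - apply (Rmult_lt_reg_r b); [lra|]. rewrite Rmult_assoc, Rinv_l, Rmult_1_r; lra.
Qed.

Lemma Rlt_div_iff a b c : 0 < b -> (a < c / b <-> a * b < c).
Proof.
  intros Hb. split; intros H.
  - apply (Rmult_lt_compat_r b) in H; [|lra].
    replace (c / b * b) with c in H by (field; lra); lra.
  - apply (Rmult_lt_reg_r b); [lra|]. replace (c / b * b) with c by (field; lra); lra.
Qed.

Lemma Rle_div_iff a b c : 0 < b -> (c <= a / b <-> c * b <= a).
Proof.
  intros Hb. split; intros H.
  - apply (Rmult_le_compat_r b) in H; [|lra].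
    replace (a / b * b) with a in H by (field; lra); lra.
  - apply (Rmult_le_reg_r b); [lra|]. replace (a / b * b) with a by (field; lra); lra.
Qed.

Lemma INR_unbounded x : exists N : nat, x < INR N.
Proof.
  assert (Hx : 0 < Rabs x + 1) by (pose proof (Rabs_pos x); lra).
  destruct (archimed_cor1 (/ (Rabs x + 1)) (Rinv_0_lt_compat _ Hx)) as (N & HN & HN0).
  exists N. apply lt_0_INR in HN0.
  apply Rinv_lt_contravar in HN; [|apply Rmult_lt_0_compat; apply Rinv_0_lt_compat; lra].
  rewrite !Rinv_inv in HN. pose proof (Rle_abs x); lra.
Qed.

Lemma pow_half_pos n : 0 < (1/2)^n.
Proof. apply pow_lt; lra. Qed.

Lemma pow_half_inv n : (1/2)^n = / 2^n.
Proof. rewrite <- pow_inv. f_equal; lra. Qed.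

Lemma pow_half_vanishing e : 0 < e -> exists N, forall n, (N <= n)%nat -> (1/2)^n < e.
Proof.
  intros He. destruct (pow_lt_1_zero (1/2) ltac:(rewrite Rabs_pos_eq; lra) e He) as [N HN].
  exists N; intros n Hn. specialize (HN n Hn). rewrite Rabs_pos_eq in HN; auto.
  apply Rlt_le, pow_half_pos.
Qed.

Lemma seq_conv_subseq {X} (d : X -> X -> R) (u : nat -> X) (l : X) (phi : nat -> nat) :
  (forall k, (k <= phi k)%nat) -> seq_conv d u l -> seq_conv d (fun k => u (phi k)) l.
Proof.
  intros Hphi Hu e He. destruct (Hu e He) as [N HN].
  exists N; intros k Hk. apply HN. specialize (Hphi k); lia.
Qed.

Section Metric.
Context {X : Type} (d : X -> X -> R) (Hd : is_metric d).

Lemma met_self x : d x x = 0.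
Proof. apply (met_sep d Hd); reflexivity. Qed.

Lemma met_pos x y : x <> y -> 0 < d x y.
Proof.
  intros Hxy. destruct (Rle_lt_or_eq_dec _ _ (met_nonneg d Hd x y)) as [h|h]; auto.
  exfalso; apply Hxy, (met_sep d Hd); auto.
Qed.

Lemma met_diff_le x y x' y' : Rabs (d x y - d x' y') <= d x x' + d y y'.
Proof.
  pose proof (met_tri d Hd x x' y). pose proof (met_tri d Hd x' y y').
  pose proof (met_tri d Hd x' x y'). pose proof (met_tri d Hd x y y').
  pose proof (met_tri d Hd x' y' y). pose proof (met_sym d Hd x x'). pose proof (met_sym d Hd y y').
  unfold Rabs; destruct Rcase_abs; lra.
Qed.

Lemma restr_dist_metric (U : X -> Prop) : is_metric (restr_dist d U).
Proof.
  unfold restr_dist; constructor; intros.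
  - apply (met_nonneg d Hd).
  - destruct x as [x Hx], y as [y Hy]; simpl; split.
    + intros E. apply (met_sep d Hd) in E. subst y. f_equal. apply proof_irrelevance.
    + intros E. injection E as ->. apply met_self.
  - apply (met_sym d Hd).
  - apply (met_tri d Hd).
Qed.

End Metric.

Section HomeoNonneg.
Variables eta etainv : R -> R.
Hypothesis Heta : homeo_nonneg_pair eta etainv.

Lemma eta_nonneg t : 0 <= t -> 0 <= eta t.
Proof. apply Heta. Qed.

Lemma etainv_nonneg t : 0 <= t -> 0 <= etainv t.
Proof. apply Heta. Qed.

Lemma etainv_eta t : 0 <= t -> etainv (eta t) = t.
Proof. apply Heta. Qed.

Lemma eta_etainv t : 0 <= t -> eta (etainv t) = t.
Proof. apply Heta. Qed.

Lemma eta_inj s t : 0 <= s -> 0 <= t -> eta s = eta t -> s = t.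
Proof. intros Hs Ht E. rewrite <- (etainv_eta s Hs), <- (etainv_eta t Ht), E; reflexivity. Qed.

Lemma eta_clamp_continuous : continuity (fun t => eta (Rmax 0 t)).
Proof.
  intros x e He. destruct Heta as (_ & _ & _ & _ & Hc & _).
  destruct (Hc (Rmax 0 x) e (Rmax_l 0 x) He) as (del & Hdel & Hd).
  exists del; split; [lra|]. intros y [_ Hy]. simpl in *. unfold R_dist in *.
  apply Hd; [apply Rmax_l|]. eapply Rle_lt_trans; [|exact Hy].
  unfold Rmax; destruct (Rle_dec 0 y), (Rle_dec 0 x); unfold Rabs;
    repeat destruct Rcase_abs; lra.
Qed.

Lemma eta_ivt x y w : 0 <= x -> x < y ->
  eta x < w < eta y \/ eta y < w < eta x -> exists s, x < s < y /\ eta s = w.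
Proof.
  intros Hx Hxy Hw.
  assert (Hcl : forall t, x <= t -> eta (Rmax 0 t) = eta t)
    by (intros; rewrite Rmax_right; lra).
  assert (Hc := eta_clamp_continuous).
  assert (Hroot : exists s, x <= s <= y /\ eta s = w).
  { destruct Hw as [Hw|Hw].
    - destruct (IVT (fun t => eta (Rmax 0 t) - w) x y) as (s & Hs & E).
      + apply continuity_minus; [exact Hc|apply continuity_const; intros ? ?; reflexivity].
      + exact Hxy.
      + rewrite Hcl; lra.
      + rewrite Hcl; lra.
      + exists s; split; [exact Hs|]. rewrite Hcl in E; lra.
    - destruct (IVT (fun t => w - eta (Rmax 0 t)) x y) as (s & Hs & E).
      + apply continuity_minus; [apply continuity_const; intros ? ?; reflexivity|exact Hc].
      + exact Hxy.
      + rewrite Hcl; lra.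
      + rewrite Hcl; lra.
      + exists s; split; [exact Hs|]. rewrite Hcl in E; lra. }
  destruct Hroot as (s & Hs & E). exists s; split; [|exact E].
  split; destruct (Req_dec s x), (Req_dec s y); subst; lra.
Qed.

(* The positive value [w] below [eta 0] and [eta (t0 + 1)] would be taken on both
   sides of [t0 := etainv 0], contradicting injectivity. *)
Lemma eta_0 : eta 0 = 0.
Proof.
  set (t0 := etainv 0). assert (Ht0 : 0 <= t0) by (apply etainv_nonneg; lra).
  assert (E0 : eta t0 = 0) by (apply eta_etainv; lra).
  destruct (Req_dec t0 0) as [Z|NZ]; [rewrite Z in E0; exact E0|]. exfalso.
  assert (P0 : 0 < eta 0).
  { destruct (Rle_lt_or_eq_dec _ _ (eta_nonneg 0 (Rle_refl 0))) as [h|h]; auto.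
    exfalso. apply NZ, eta_inj; lra. }
  assert (P1 : 0 < eta (t0 + 1)).
  { destruct (Rle_lt_or_eq_dec _ _ (eta_nonneg (t0 + 1) ltac:(lra))) as [h|h]; auto.
    exfalso. assert (t0 + 1 = t0) by (apply eta_inj; lra). lra. }
  set (w := Rmin (eta 0) (eta (t0 + 1)) / 2).
  assert (Hw : 0 < w < eta 0 /\ w < eta (t0 + 1))
    by (unfold w, Rmin; destruct Rle_dec; lra).
  destruct (eta_ivt 0 t0 w ltac:(lra) ltac:(lra) ltac:(lra)) as (s1 & Hs1 & E1).
  destruct (eta_ivt t0 (t0 + 1) w ltac:(lra) ltac:(lra) ltac:(lra)) as (s2 & Hs2 & E2).
  assert (s1 = s2) by (apply eta_inj; lra). lra.
Qed.

Lemma eta_increasing s t : 0 <= s -> s < t -> eta s < eta t.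
Proof.
  intros Hs Hst. destruct (Rlt_or_le (eta s) (eta t)) as [h|h]; auto. exfalso.
  destruct (Req_dec (eta s) (eta t)) as [E|NE].
  { assert (s = t) by (apply eta_inj; lra). lra. }
  assert (Pt : 0 < eta t).
  { destruct (Rle_lt_or_eq_dec _ _ (eta_nonneg t ltac:(lra))) as [h'|h']; auto.
    assert (t = 0) by (apply eta_inj; [lra|lra|rewrite eta_0; lra]). lra. }
  destruct (Req_dec s 0) as [->|NZ]; [rewrite eta_0 in h; lra|].
  destruct (eta_ivt 0 s (eta t)) as (u & Hu & Eu); [lra|lra|rewrite eta_0; lra|].
  assert (u = t) by (apply eta_inj; lra). lra.
Qed.

Lemma etainv_le u v : 0 <= u -> u <= v -> etainv u <= etainv v.
Proof.
  intros Hu Huv. destruct (Rle_or_lt (etainv u) (etainv v)) as [h|h]; auto. exfalso.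
  pose proof (eta_increasing _ _ (etainv_nonneg v ltac:(lra)) h).
  rewrite !eta_etainv in H; lra.
Qed.

Lemma etainv_pos u : 0 < u -> 0 < etainv u.
Proof.
  intros Hu. destruct (Rle_lt_or_eq_dec _ _ (etainv_nonneg u ltac:(lra))) as [h|h]; auto.
  pose proof (eta_etainv u ltac:(lra)) as E. rewrite <- h, eta_0 in E. lra.
Qed.

Lemma le_etainv s u : 0 <= s -> eta s <= u -> s <= etainv u.
Proof.
  intros Hs Hu. rewrite <- (etainv_eta s Hs). apply etainv_le; auto. apply eta_nonneg; auto.
Qed.

Let eta' := eta_prime etainv.

Lemma eta_prime_pos t : 0 < t -> 0 < eta' t.
Proof.
  intros Ht. unfold eta', eta_prime. destruct Req_EM_T; [lra|].
  apply Rdiv_lt_0_compat; [lra|]. apply etainv_pos, Rdiv_lt_0_compat; lra.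
Qed.

Lemma eta_prime_nonneg t : 0 <= t -> 0 <= eta' t.
Proof.
  intros Ht. destruct (Req_dec t 0) as [->|NZ].
  - unfold eta', eta_prime. destruct Req_EM_T; lra.
  - apply Rlt_le, eta_prime_pos; lra.
Qed.

Lemma eta_prime_le s t : 0 < s -> s <= t -> eta' s <= eta' t.
Proof.
  intros Hs Hst. unfold eta', eta_prime.
  destruct Req_EM_T; [lra|]. destruct Req_EM_T; [lra|].
  assert (0 < etainv (1 / t)) by (apply etainv_pos, Rdiv_lt_0_compat; lra).
  assert (etainv (1 / t) <= etainv (1 / s)).
  { apply etainv_le; [apply Rlt_le, Rdiv_lt_0_compat; lra|].
    unfold Rdiv; rewrite !Rmult_1_l. apply Rinv_le_contravar; lra. }
  unfold Rdiv in *; rewrite !Rmult_1_l in *. apply Rinv_le_contravar; lra.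
Qed.

(* [eta' t <= e/2 < e] as soon as [1/t >= eta (2/e)]. *)
Lemma eta_prime_vanishing e : 0 < e ->
  exists del, 0 < del /\ forall t, 0 < t < del -> eta' t < e.
Proof.
  intros He. assert (H2e : 0 < 2 / e) by (apply Rdiv_lt_0_compat; lra).
  set (K := eta (2 / e) + 1).
  assert (HK : 0 < K) by (pose proof (eta_nonneg _ (Rlt_le _ _ H2e)); unfold K; lra).
  exists (/ K). split; [apply Rinv_0_lt_compat; lra|].
  intros t [Ht Htk]. unfold eta', eta_prime. destruct Req_EM_T; [lra|].
  assert (Hinv : 2 / e <= etainv (1 / t)).
  { apply le_etainv; [lra|].
    apply Rinv_lt_contravar in Htk; [|apply Rmult_lt_0_compat; [lra|apply Rinv_0_lt_compat; lra]].
    rewrite Rinv_inv in Htk. unfold K in Htk. unfold Rdiv at 2. lra. }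
  apply Rle_lt_trans with (1 / (2 / e)).
  - apply Rmult_le_compat_l; [lra|]. apply Rinv_le_contravar; lra.
  - replace (1 / (2 / e)) with (e / 2) by (field; lra). lra.
Qed.

Lemma qs_inequality_inverse {Y Z : Type} (dY : Y -> Y -> R) (dZ : Z -> Z -> R)
  (HY : is_metric dY) (HZ : is_metric dZ) (g : Y -> Z) (h : Z -> Y) :
  qs_inequality dY dZ eta g -> (forall z, g (h z) = z) -> qs_inequality dZ dY eta' h.
Proof.
  intros Hg Hgh x y z Hxz.
  assert (Hinj : forall u v, h u = h v -> u = v)
    by (intros u v E; rewrite <- (Hgh u), <- (Hgh v), E; reflexivity).
  destruct (classic (x = y)) as [<-|Nxy].
  { rewrite !met_self by assumption. unfold Rdiv; rewrite !Rmult_0_l.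
    apply eta_prime_nonneg; lra. }
  assert (HP : 0 < dZ x y) by (apply (met_pos dZ HZ); auto).
  assert (HQ : 0 < dZ x z) by (apply (met_pos dZ HZ); auto).
  assert (HP' : 0 < dY (h x) (h y)) by (apply (met_pos dY HY); intro E; auto).
  assert (HQ' : 0 < dY (h x) (h z)) by (apply (met_pos dY HY); intro E; auto).
  pose proof (Hg (h x) (h z) (h y) ltac:(intro E; auto)) as Q. rewrite !Hgh in Q.
  assert (I1 : etainv (dZ x z / dZ x y) <= dY (h x) (h z) / dY (h x) (h y)).
  { rewrite <- (etainv_eta (dY (h x) (h z) / dY (h x) (h y)))
      by (apply Rlt_le, Rdiv_lt_0_compat; auto).
    apply etainv_le; auto. apply Rlt_le, Rdiv_lt_0_compat; auto. }
  assert (I2 : 0 < etainv (dZ x z / dZ x y)) by (apply etainv_pos, Rdiv_lt_0_compat; auto).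
  unfold eta', eta_prime. destruct Req_EM_T as [E|_].
  { assert (0 < dZ x y / dZ x z) by (apply Rdiv_lt_0_compat; auto). lra. }
  replace (1 / (dZ x y / dZ x z)) with (dZ x z / dZ x y) by (field; lra).
  replace (dY (h x) (h y) / dY (h x) (h z)) with (/ (dY (h x) (h z) / dY (h x) (h y)))
    by (field; lra).
  unfold Rdiv at 2. rewrite Rmult_1_l. apply Rinv_le_contravar; auto.
Qed.

End HomeoNonneg.

Section QuasisymmetricEmbedding.
Context {X Y : Type} (dX : X -> X -> R) (dY : Y -> Y -> R).
Hypotheses (HX : is_metric dX) (HY : is_metric dY).
Variable et : R -> R.
Hypothesis et_le : forall s t, 0 < s -> s <= t -> et s <= et t.
Hypothesis et_pos : forall t, 0 < t -> 0 < et t.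
Hypothesis et_vanishing :
  forall e, 0 < e -> exists del, 0 < del /\ forall t, 0 < t < del -> et t < e.
Hypothesis X_other_point : forall x : X, exists b, b <> x.
Variable f : X -> Y.
Hypothesis f_inj : forall x y, f x = f y -> x = y.
Hypothesis f_qs : qs_inequality dX dY et f.

Lemma qs_inequality_le x y z : x <> z ->
  dY (f x) (f y) <= et (dX x y / dX x z) * dY (f x) (f z).
Proof.
  intros Hxz. apply Rdiv_le_iff; [|apply f_qs; auto].
  apply (met_pos dY HY). intro E; apply Hxz, f_inj, E.
Qed.

Lemma qs_continuous : mcontinuous dX dY f.
Proof.
  intros x e He. destruct (X_other_point x) as [b Hb].
  set (K := dY (f x) (f b)).
  assert (HK : 0 < K) by (apply (met_pos dY HY); intro E; apply Hb, f_inj; auto).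
  assert (Hxb : 0 < dX x b) by (apply (met_pos dX HX); auto).
  destruct (et_vanishing (e / K) ltac:(apply Rdiv_lt_0_compat; lra)) as (del & Hdel & Hs).
  exists (del * dX x b). split; [nra|]. intros y Hy.
  destruct (classic (x = y)) as [<-|Nxy]; [rewrite (met_self dY HY); lra|].
  assert (Hr : 0 < dX x y / dX x b < del).
  { split; [apply Rdiv_lt_0_compat; auto; apply (met_pos dX HX); auto|].
    apply Rdiv_lt_iff; auto. }
  pose proof (qs_inequality_le x y b ltac:(auto)) as Q. fold K in Q.
  pose proof (Hs _ Hr) as Hlt. apply (Rmult_lt_compat_r K) in Hlt; [|exact HK].
  replace (e / K * K) with e in Hlt by (field; lra). lra.
Qed.

Lemma qs_inverse_continuous : forall x e, 0 < e -> exists delta, 0 < delta /\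
  forall y, dY (f x) (f y) < delta -> dX x y < e.
Proof.
  intros x e He. destruct (X_other_point x) as [b Hb].
  set (K := dY (f x) (f b)).
  assert (HK : 0 < K) by (apply (met_pos dY HY); intro E; apply Hb, f_inj; auto).
  assert (Hxb : 0 < dX x b) by (apply (met_pos dX HX); auto).
  set (t0 := dX x b / e). assert (Ht0 : 0 < t0) by (apply Rdiv_lt_0_compat; lra).
  pose proof (et_pos t0 Ht0) as Hp0.
  exists (K / et t0). split; [apply Rdiv_lt_0_compat; lra|].
  intros y Hy. destruct (Rlt_or_le (dX x y) e) as [h|h]; auto. exfalso.
  assert (Nxy : x <> y) by (intro E; subst; rewrite (met_self dX HX) in h; lra).
  pose proof (qs_inequality_le x b y Nxy) as Q. fold K in Q.
  assert (et (dX x b / dX x y) <= et t0).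
  { apply et_le; [apply Rdiv_lt_0_compat; lra|].
    unfold t0, Rdiv. apply Rmult_le_compat_l; [lra|]. apply Rinv_le_contravar; lra. }
  apply (Rmult_lt_compat_l (et t0)) in Hy; [|exact Hp0].
  replace (et t0 * (K / et t0)) with K in Hy by (field; lra).
  pose proof (met_nonneg dY HY (f x) (f y)). nra.
Qed.

Lemma qs_embedding_of_inequality : qs_embedding dX dY et f.
Proof.
  split; [|exact f_qs]. split; [exact f_inj|].
  split; [exact qs_continuous|exact qs_inverse_continuous].
Qed.

End QuasisymmetricEmbedding.

(* [h] inverts the quasisymmetric homeomorphism onto [X] given by self-quasisymmetry. *)
Lemma self_qs_inverse {X : Type} (d : X -> X -> R) (Hd : is_metric d)
  (eta etainv : R -> R) (Heta : homeo_nonneg_pair eta etainv) (x0 : X) :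
  self_qs_at d eta x0 -> forall rho, 0 < rho ->
  exists h : X -> X, (forall y, d x0 (h y) < rho) /\ (forall y y', h y = h y' -> y = y') /\
    qs_inequality d d (eta_prime etainv) h.
Proof.
  intros (rx & Hrx & Hself) rho Hrho.
  destruct (Hself (Rmin (rx / 2) rho)) as (Uo & HUo & g & ((_ & _ & _) & Hgqs) & Hgs).
  { split; [apply Rmin_glb_lt; lra|]. eapply Rle_lt_trans; [apply Rmin_l|lra]. }
  destruct (choice (fun y u => g u = y) Hgs) as [h Hh].
  exists (fun y => proj1_sig (h y)). split; [|split].
  - intro y. eapply Rlt_le_trans; [apply HUo, (proj2_sig (h y))|apply Rmin_r].
  - intros y y' E. rewrite <- (Hh y), <- (Hh y'). f_equal.
    destruct (h y), (h y'); simpl in E; subst. f_equal; apply proof_irrelevance.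
  - exact (qs_inequality_inverse eta etainv Heta _ _ (restr_dist_metric d Hd Uo) Hd g h Hgqs Hh).
Qed.

Record free_ultrafilter (U : (nat -> Prop) -> Prop) : Prop := {
  uf_superset : forall A B : nat -> Prop, U A -> (forall n, A n -> B n) -> U B;
  uf_inter : forall A B : nat -> Prop, U A -> U B -> U (fun n => A n /\ B n);
  uf_nonempty : forall A : nat -> Prop, U A -> exists n, A n;
  uf_ultra : forall A : nat -> Prop, U A \/ U (fun n => ~ A n);
  uf_tail : forall m, U (fun n => (m <= n)%nat) }.

Lemma free_ultrafilter_exists : exists U, free_ultrafilter U.
Proof.
  destruct (filter.ultraFilterLemma filter.eventually_filter) as (G & HG & Htail).
  pose proof (filter.ultra_proper (F := G)) as GP.
  pose proof (filter.filter_filter (F := G)) as GF.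
  exists G; split.
  - intros A B GA AB. exact (@filter.filterS _ _ GF _ _ AB GA).
  - intros A B GA GB. exact (@filter.filterI _ _ GF _ _ GA GB).
  - intros A GA. exact (@filter.filter_ex _ _ GP _ GA).
  - intros A. exact (filter.in_ultra_setVsetC A HG).
  - intros m. apply Htail. exists m; [exact I|]. intros n Hn. exact (ssrbool.elimT ssrnat.leP Hn).
Qed.

Section Ultrafilter.
Variable U : (nat -> Prop) -> Prop.
Hypothesis HU : free_ultrafilter U.

Lemma uf_all (A : nat -> Prop) : (forall n, A n) -> U A.
Proof. intros HA. apply (uf_superset _ HU _ _ (uf_tail _ HU 0)); auto. Qed.

Lemma uf_exists_lt (P : nat -> nat -> Prop) N :
  U (fun n => exists i, (i < N)%nat /\ P i n) -> exists i, (i < N)%nat /\ U (P i).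
Proof.
  induction N as [|N IH]; intros HN.
  - destruct (uf_nonempty _ HU _ HN) as (n & i & Hi & _). lia.
  - destruct (uf_ultra _ HU (P N)) as [h|h]; [exists N; split; auto|].
    destruct IH as (i & Hi & Hi2); [|exists i; split; auto].
    apply (uf_superset _ HU _ _ (uf_inter _ HU _ _ HN h)). intros n ((i & Hi & Hp) & Hn).
    exists i; split; auto. destruct (Nat.eq_dec i N); subst; [contradiction|lia].
Qed.

Lemma uf_forall_lt (P : nat -> nat -> Prop) N :
  (forall i, (i < N)%nat -> U (P i)) -> U (fun n => forall i, (i < N)%nat -> P i n).
Proof.
  induction N as [|N IH]; intros HP; [apply uf_all; intros; lia|].
  apply (uf_superset _ HU _ _ (uf_inter _ HU _ _ (IH (fun i Hi => HP i ltac:(lia))) (HP N ltac:(lia)))).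
  intros n [H1 H2] i Hi. destruct (Nat.eq_dec i N); subst; auto. apply H1; lia.
Qed.

Definition is_ulim (a : nat -> R) (L : R) : Prop :=
  forall e, 0 < e -> U (fun n => Rabs (a n - L) < e).

(* The ultralimit is the supremum of the [t] with [t <= a n] for [U]-many [n]. *)
Lemma ulim_exists a M : (forall n, Rabs (a n) <= M) -> exists L, is_ulim a L.
Proof.
  intros HM. set (S := fun t => U (fun n => t <= a n)).
  assert (Hb : bound S).
  { exists M. intros t Ht. destruct (uf_nonempty _ HU _ Ht) as (n & Hn).
    specialize (HM n). unfold Rabs in HM; destruct Rcase_abs; lra. }
  assert (Hne : exists t, S t).
  { exists (- M). apply uf_all. intro n. specialize (HM n). unfold Rabs in HM; destruct Rcase_abs; lra. }
  destruct (completeness S Hb Hne) as (L & HL1 & HL2).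
  exists L. intros e He.
  assert (A1 : U (fun n => L - e / 2 <= a n)).
  { destruct (classic (exists t, S t /\ L - e / 2 < t)) as [(t & Ht & Hlt)|Hn].
    - apply (uf_superset _ HU _ _ Ht). intros; lra.
    - exfalso. assert (L <= L - e / 2); [|lra]. apply HL2. intros t Ht.
      destruct (Rle_or_lt t (L - e / 2)); auto. exfalso; apply Hn; eauto. }
  assert (A2 : U (fun n => ~ (L + e / 2 <= a n))).
  { destruct (uf_ultra _ HU (fun n => L + e / 2 <= a n)) as [h|h]; auto.
    exfalso. assert (L + e / 2 <= L) by (apply HL1; exact h). lra. }
  apply (uf_superset _ HU _ _ (uf_inter _ HU _ _ A1 A2)). intros n [h1 h2].
  unfold Rabs; destruct Rcase_abs; lra.
Qed.

Lemma ulim_le a b A B : is_ulim a A -> is_ulim b B -> U (fun n => a n <= b n) -> A <= B.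
Proof.
  intros Ha Hb Hab. destruct (Rle_or_lt A B) as [|h]; auto. exfalso.
  set (e := (A - B) / 2). assert (He : 0 < e) by (unfold e; lra).
  destruct (uf_nonempty _ HU _ (uf_inter _ HU _ _ Hab (uf_inter _ HU _ _ (Ha e He) (Hb e He))))
    as (n & h1 & h2 & h3).
  unfold Rabs in *; repeat destruct Rcase_abs; unfold e in *; lra.
Qed.

Lemma ulim_unique a L1 L2 : is_ulim a L1 -> is_ulim a L2 -> L1 = L2.
Proof.
  intros H1 H2. apply Rle_antisym; eapply ulim_le; eauto; apply uf_all; intros; lra.
Qed.

Lemma ulim_ext a b L : (forall n, a n = b n) -> is_ulim a L -> is_ulim b L.
Proof. intros E H e He. apply (uf_superset _ HU _ _ (H e He)). intros n; rewrite E; auto. Qed.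

Lemma ulim_const c : is_ulim (fun _ => c) c.
Proof. intros e He. apply uf_all. intros; rewrite Rminus_diag, Rabs_R0; lra. Qed.

Lemma ulim_plus a b A B : is_ulim a A -> is_ulim b B -> is_ulim (fun n => a n + b n) (A + B).
Proof.
  intros Ha Hb e He.
  apply (uf_superset _ HU _ _ (uf_inter _ HU _ _ (Ha (e / 2) ltac:(lra)) (Hb (e / 2) ltac:(lra)))).
  intros n [h1 h2]. replace (a n + b n - (A + B)) with ((a n - A) + (b n - B)) by ring.
  eapply Rle_lt_trans; [apply Rabs_triang|lra].
Qed.

Lemma ulim_scal a A c : is_ulim a A -> is_ulim (fun n => c * a n) (c * A).
Proof.
  intros Ha e He. assert (Hc : 0 < Rabs c + 1) by (pose proof (Rabs_pos c); lra).
  apply (uf_superset _ HU _ _ (Ha (e / (Rabs c + 1)) (Rdiv_lt_0_compat _ _ He Hc))).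
  intros n h. apply Rlt_div_iff in h; [|exact Hc].
  replace (c * a n - c * A) with (c * (a n - A)) by ring. rewrite Rabs_mult.
  pose proof (Rabs_pos c). pose proof (Rabs_pos (a n - A)). nra.
Qed.

Lemma ulim_lt_eventually a A c : is_ulim a A -> A < c -> U (fun n => a n < c).
Proof.
  intros Ha h. apply (uf_superset _ HU _ _ (Ha (c - A) ltac:(lra))).
  intros n h1. unfold Rabs in h1; destruct Rcase_abs; lra.
Qed.

(* Junk value [0] for unbounded sequences. *)
Definition ulim (a : nat -> R) : R := epsilon (inhabits 0) (fun L => is_ulim a L).

Lemma ulim_spec a M : (forall n, Rabs (a n) <= M) -> is_ulim a (ulim a).
Proof. intros HM. unfold ulim. apply epsilon_spec. eapply ulim_exists; eauto. Qed.

End Ultrafilter.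

Definition doubling_with {X : Type} (d : X -> X -> R) (C : nat) : Prop :=
  forall (A : X -> Prop) (r : R), 0 <= r -> (forall x y, A x -> A y -> d x y <= r) ->
    exists B : nat -> X -> Prop,
      (forall i, (i < C)%nat -> forall x y, B i x -> B i y -> d x y <= r / 2) /\
      (forall x, A x -> exists i, (i < C)%nat /\ B i x).

Lemma doubling_net {X : Type} (d : X -> X -> R) (C : nat) :
  (1 <= C)%nat -> doubling_with d C ->
  forall k (A : X -> Prop) r a0, 0 <= r -> (forall x y, A x -> A y -> d x y <= r) -> A a0 ->
  exists pts : nat -> X, (forall i, A (pts i)) /\
    forall y, A y -> exists i, (i < C ^ k)%nat /\ d y (pts i) <= r / 2 ^ k.
Proof.
  intros HC Hdb k. induction k as [|k IH]; intros A r a0 Hr Hdiam Ha0.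
  { exists (fun _ => a0). split; auto. intros y Hy. exists O. split; [simpl; lia|].
    simpl. unfold Rdiv. rewrite Rinv_1, Rmult_1_r. auto. }
  destruct (Hdb A r Hr Hdiam) as (B & HB1 & HB2).
  assert (HP : forall i, exists P : nat -> X, (forall j, A (P j)) /\
    ((i < C)%nat -> forall y, A y -> B i y ->
      exists j, (j < C ^ k)%nat /\ d y (P j) <= (r / 2) / 2 ^ k)).
  { intro i. destruct (classic ((i < C)%nat /\ exists y0, A y0 /\ B i y0))
      as [(Hi & y0 & Hy0 & Hy0')|Hn].
    - destruct (IH (fun y => A y /\ B i y) (r / 2) y0 ltac:(lra)) as (P & HP1 & HP2).
      + intros x y [_ hx] [_ hy]. apply (HB1 i Hi); auto.
      + auto.
      + exists P. split; [intro j; apply HP1|]. intros _ y Hy Hy'. apply HP2; auto.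
    - exists (fun _ => a0). split; auto. intros Hi y Hy Hy'. exfalso; apply Hn; eauto. }
  destruct (choice _ HP) as [F HF].
  set (N := (C ^ k)%nat).
  assert (HN : (1 <= N)%nat) by (unfold N; clear -HC; induction k; simpl; nia).
  (* The net of the [i]-th piece occupies the indices [i * C^k + j] with [j < C^k]. *)
  exists (fun l => F (l / N)%nat (l mod N)%nat). split; [intro l; apply HF|].
  intros y Hy. destruct (HB2 y Hy) as (i & Hi & Hiy).
  destruct (proj2 (HF i) Hi y Hy Hiy) as (j & Hj & Hdj).
  exists (i * N + j)%nat. split; [rewrite Nat.pow_succ_r'; fold N; nia|].
  rewrite <- (Nat.div_unique (i * N + j) N i j), <- (Nat.mod_unique (i * N + j) N i j) by lia.
  replace (r / 2 ^ S k) with (r / 2 / 2 ^ k) by (simpl; field; apply pow_nonzero; lra).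
  exact Hdj.
Qed.

Lemma doubling_ball_net {X : Type} (d : X -> X -> R) (Hd : is_metric d) (C : nat) :
  (1 <= C)%nat -> doubling_with d C -> forall k c rho, 0 <= rho ->
  exists pts : nat -> X, (forall i, d c (pts i) <= rho) /\
    forall y, d c y <= rho -> exists i, (i < C ^ k)%nat /\ d y (pts i) <= 2 * rho / 2 ^ k.
Proof.
  intros HC Hdb k c rho Hrho.
  apply (doubling_net d C HC Hdb k (fun y => d c y <= rho) (2 * rho) c);
    [lra| |rewrite (met_self d Hd); lra].
  intros x y Hx Hy. pose proof (met_tri d Hd x c y). rewrite (met_sym d Hd x c) in H. lra.
Qed.

Section UltraLimit.
Context {X : Type} (d : X -> X -> R) (Hd : is_metric d).
Variable U : (nat -> Prop) -> Prop.
Hypothesis HU : free_ultrafilter U.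
Variable lam : nat -> R.
Hypothesis lam_pos : forall n, 0 < lam n.
Variable q : nat -> X.

Definition sdist (x y : nat -> X) (n : nat) : R := d (x n) (y n) / lam n.

Definition admissible (x : nat -> X) : Prop := exists M, forall n, sdist q x n <= M.

Lemma sdist_nonneg x y n : 0 <= sdist x y n.
Proof. apply Rdiv_le_0_compat; [apply (met_nonneg d Hd)|apply lam_pos]. Qed.

Lemma sdist_sym x y n : sdist x y n = sdist y x n.
Proof. unfold sdist. rewrite (met_sym d Hd). reflexivity. Qed.

Lemma sdist_tri x y z n : sdist x z n <= sdist x y n + sdist y z n.
Proof.
  unfold sdist, Rdiv. rewrite <- Rmult_plus_distr_r.
  apply Rmult_le_compat_r; [apply Rlt_le, Rinv_0_lt_compat, lam_pos|apply (met_tri d Hd)].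
Qed.

Lemma sdist_self x n : sdist x x n = 0.
Proof. unfold sdist. rewrite (met_self d Hd). unfold Rdiv; ring. Qed.

Lemma admissible_base : admissible q.
Proof. exists 0. intro n. rewrite sdist_self. lra. Qed.

Lemma sdist_bounded x y : admissible x -> admissible y ->
  exists M, forall n, Rabs (sdist x y n) <= M.
Proof.
  intros [Mx Hx] [My Hy]. exists (Mx + My). intro n.
  rewrite Rabs_pos_eq by apply sdist_nonneg.
  pose proof (sdist_tri x q y n). rewrite (sdist_sym x q) in H.
  specialize (Hx n). specialize (Hy n). lra.
Qed.

Definition udist (x y : nat -> X) : R := ulim U (sdist x y).

Lemma udist_spec x y : admissible x -> admissible y -> is_ulim U (sdist x y) (udist x y).
Proof. intros Hx Hy. destruct (sdist_bounded x y Hx Hy) as [M HM]. eapply ulim_spec; eauto. Qed.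

Lemma udist_le x y c : admissible x -> admissible y ->
  U (fun n => sdist x y n <= c) -> udist x y <= c.
Proof.
  intros Hx Hy Hc. apply (ulim_le U HU (sdist x y) (fun _ => c)); auto.
  - apply udist_spec; auto.
  - apply ulim_const; auto.
Qed.

Lemma udist_ge x y c : admissible x -> admissible y ->
  U (fun n => c <= sdist x y n) -> c <= udist x y.
Proof.
  intros Hx Hy Hc. apply (ulim_le U HU (fun _ => c) (sdist x y)); auto.
  - apply ulim_const; auto.
  - apply udist_spec; auto.
Qed.

Lemma udist_lt_eventually x y c : admissible x -> admissible y ->
  udist x y < c -> U (fun n => sdist x y n < c).
Proof. intros. eapply ulim_lt_eventually; eauto. apply udist_spec; auto. Qed.

Lemma udist_nonneg x y : admissible x -> admissible y -> 0 <= udist x y.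
Proof. intros. apply udist_ge; auto. apply uf_all; auto. intros; apply sdist_nonneg. Qed.

Lemma udist_self x : admissible x -> udist x x = 0.
Proof.
  intros. apply (ulim_unique U HU (sdist x x)); [apply udist_spec; auto|].
  apply (ulim_ext U HU (fun _ => 0)); [intros; rewrite sdist_self; auto|apply ulim_const; auto].
Qed.

Lemma udist_sym x y : admissible x -> admissible y -> udist x y = udist y x.
Proof.
  intros. apply (ulim_unique U HU (sdist x y)); [apply udist_spec; auto|].
  apply (ulim_ext U HU (sdist y x)); [intros; apply sdist_sym|apply udist_spec; auto].
Qed.

Lemma udist_tri x y z : admissible x -> admissible y -> admissible z ->
  udist x z <= udist x y + udist y z.
Proof.
  intros. apply (ulim_le U HU (sdist x z) (fun n => sdist x y n + sdist y z n)).
  - apply udist_spec; auto.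
  - apply ulim_plus; auto; apply udist_spec; auto.
  - apply uf_all; auto. intros; apply sdist_tri.
Qed.

Lemma udist_congr x x' y y' : admissible x -> admissible x' -> admissible y -> admissible y' ->
  udist x x' = 0 -> udist y y' = 0 -> udist x y = udist x' y'.
Proof.
  intros Hx Hx' Hy Hy' E1 E2.
  pose proof (udist_tri x x' y Hx Hx' Hy). pose proof (udist_tri x' y' y Hx' Hy' Hy).
  pose proof (udist_tri x' x y' Hx' Hx Hy'). pose proof (udist_tri x y y' Hx Hy Hy').
  rewrite (udist_sym x' x) in *; auto. rewrite (udist_sym y' y) in *; auto. lra.
Qed.

Definition uclass (x : nat -> X) : (nat -> X) -> Prop := fun y => admissible y /\ udist x y = 0.

(* The quotient of the admissible sequences by [udist x y = 0], as the set of its classes. *)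
Definition ulimit : Type := {S : (nat -> X) -> Prop | exists x, admissible x /\ S = uclass x}.

Definition urep (s : ulimit) : nat -> X :=
  proj1_sig (constructive_indefinite_description _ (proj2_sig s)).

Lemma urep_spec s : admissible (urep s) /\ proj1_sig s = uclass (urep s).
Proof. unfold urep. destruct constructive_indefinite_description as [x Hx]. exact Hx. Qed.

Lemma urep_admissible s : admissible (urep s).
Proof. apply urep_spec. Qed.

Definition uclass_point (x : nat -> X) (Hx : admissible x) : ulimit :=
  exist _ (uclass x) (ex_intro _ x (conj Hx eq_refl)).

(* Inadmissible sequences are sent to the base point. *)
Definition upoint (x : nat -> X) : ulimit :=
  match excluded_middle_informative (admissible x) with
  | left Hx => uclass_point x Hx
  | right _ => uclass_point q admissible_base
  end.

Definition ulimit_dist (s t : ulimit) : R := udist (urep s) (urep t).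

Definition ubase : ulimit := upoint q.

Lemma upoint_class x : admissible x -> proj1_sig (upoint x) = uclass x.
Proof. intros Hx. unfold upoint. destruct excluded_middle_informative; [reflexivity|contradiction]. Qed.

Lemma uclass_eq x y : admissible x -> admissible y -> udist x y = 0 -> uclass x = uclass y.
Proof.
  intros Hx Hy E. apply functional_extensionality; intro w.
  apply propositional_extensionality. unfold uclass. split; intros [Hw Ew]; split; auto.
  - pose proof (udist_tri y x w Hy Hx Hw). pose proof (udist_nonneg y w Hy Hw).
    rewrite (udist_sym y x) in *; auto. lra.
  - pose proof (udist_tri x y w Hx Hy Hw). pose proof (udist_nonneg x w Hx Hw). lra.
Qed.

Lemma udist_urep_upoint x : admissible x -> udist (urep (upoint x)) x = 0.
Proof.
  intros Hx. destruct (urep_spec (upoint x)) as [Ha E]. rewrite upoint_class in E; auto.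
  assert (Hc : uclass x x) by (split; auto; apply udist_self; auto).
  rewrite E in Hc. apply Hc.
Qed.

Lemma ulimit_dist_upoint x y : admissible x -> admissible y ->
  ulimit_dist (upoint x) (upoint y) = udist x y.
Proof. intros. apply udist_congr; auto using urep_admissible, udist_urep_upoint. Qed.

Lemma ulimit_dist_upoint_l x t : admissible x -> ulimit_dist (upoint x) t = udist x (urep t).
Proof.
  intros. apply udist_congr; auto using urep_admissible, udist_urep_upoint.
  apply udist_self, urep_admissible.
Qed.

Lemma ulimit_dist_upoint_r s y : admissible y -> ulimit_dist s (upoint y) = udist (urep s) y.
Proof.
  intros. apply udist_congr; auto using urep_admissible, udist_urep_upoint.
  apply udist_self, urep_admissible.
Qed.

Lemma ulimit_dist_base t : ulimit_dist ubase t = udist q (urep t).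
Proof. apply ulimit_dist_upoint_l, admissible_base. Qed.

Lemma ulimit_dist_metric : is_metric ulimit_dist.
Proof.
  unfold ulimit_dist. constructor.
  - intros. apply udist_nonneg; apply urep_admissible.
  - intros s t. split.
    + intros E. destruct s as [s Hs], t as [t Ht].
      assert (Est : s = t).
      { pose proof (urep_spec (exist _ s Hs)) as [_ Es].
        pose proof (urep_spec (exist _ t Ht)) as [_ Et]. simpl in Es, Et.
        rewrite Es, Et. apply uclass_eq; auto using urep_admissible. }
      subst t. f_equal. apply proof_irrelevance.
    + intros ->. apply udist_self, urep_admissible.
  - intros. apply udist_sym; apply urep_admissible.
  - intros. apply udist_tri; apply urep_admissible.
Qed.

Fixpoint chain_set (xs : nat -> nat -> X) (j n : nat) : Prop :=
  match j with
  | O => True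
  | S j' => chain_set xs j' n /\ (j' < n)%nat /\ sdist (xs j') (xs (S j')) n < (1/2)^j'
  end.

Lemma chain_set_eventually xs : (forall j, admissible (xs j)) ->
  (forall j, udist (xs j) (xs (S j)) < (1/2)^j) -> forall j, U (chain_set xs j).
Proof.
  intros Ha Hx j. induction j as [|j IH]; simpl; [apply uf_all; auto|].
  apply (uf_inter _ HU _ _ IH), (uf_inter _ HU).
  - apply (uf_superset _ HU _ _ (uf_tail _ HU (S j))). intros; lia.
  - apply udist_lt_eventually; auto.
Qed.

Lemma chain_set_le xs j n : chain_set xs j n -> (j <= n)%nat.
Proof. destruct j; simpl; lia. Qed.

Lemma chain_set_sdist xs k n : chain_set xs k n -> forall j, (j <= k)%nat ->
  sdist (xs j) (xs k) n <= 2 * (1/2)^j - 2 * (1/2)^k.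
Proof.
  induction k as [|k IH]; intros H j Hj.
  - replace j with O by lia. rewrite sdist_self. lra.
  - destruct (Nat.eq_dec j (S k)) as [->|NE]; [rewrite sdist_self; lra|].
    destruct H as (H1 & H2 & H3).
    pose proof (IH H1 j ltac:(lia)). pose proof (sdist_tri (xs j) (xs k) (xs (S k)) n).
    simpl. lra.
Qed.

Fixpoint chain_top (xs : nat -> nat -> X) (j n : nat) : nat :=
  match j with
  | O => O
  | S j' => if excluded_middle_informative (chain_set xs (S j') n) then S j' else chain_top xs j' n
  end.

Lemma chain_top_spec xs j n : chain_set xs (chain_top xs j n) n.
Proof. induction j as [|j IH]; simpl; [exact I|]. destruct excluded_middle_informative; auto. Qed.

Lemma chain_top_max xs j n i : (i <= j)%nat -> chain_set xs i n -> (i <= chain_top xs j n)%nat.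
Proof.
  induction j as [|j IH]; intros Hi HA; simpl; [lia|].
  destruct excluded_middle_informative as [h|h]; [lia|].
  destruct (Nat.eq_dec i (S j)) as [->|NE]; [contradiction|]. apply IH; auto; lia.
Qed.

(* Diagonal limit of a fast Cauchy sequence: at index [n] follow [xs] as far as the chain
   sets allow; freeness of [U] makes every chain set large. *)
Lemma fast_cauchy_udist_limit xs : (forall j, admissible (xs j)) ->
  (forall j, udist (xs j) (xs (S j)) < (1/2)^j) ->
  exists y, admissible y /\ forall j, udist (xs j) y <= 2 * (1/2)^j.
Proof.
  intros Hxa Hxs.
  set (y := fun n => xs (chain_top xs n n) n).
  assert (Hy : admissible y).
  { destruct (Hxa O) as [M0 HM0]. exists (M0 + 2). intro n.
    pose proof (sdist_tri q (xs O) y n). pose proof (HM0 n).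
    pose proof (chain_set_sdist xs _ n (chain_top_spec xs n n) O ltac:(lia)).
    pose proof (pow_half_pos (chain_top xs n n)). unfold sdist, y in *. simpl in *. lra. }
  exists y. split; auto. intro j. apply udist_le; auto.
  apply (uf_superset _ HU _ _ (chain_set_eventually xs Hxa Hxs j)). intros n Hn.
  assert (Hk : (j <= chain_top xs n n)%nat)
    by (apply chain_top_max; auto; eapply chain_set_le; eauto).
  pose proof (chain_set_sdist xs _ n (chain_top_spec xs n n) j Hk).
  pose proof (pow_half_pos (chain_top xs n n)). unfold sdist, y in *. lra.
Qed.

Fixpoint running_max (f : nat -> nat) (j : nat) : nat :=
  match j with O => f O | S j' => Nat.max (running_max f j') (f (S j')) end.

Lemma running_max_ge f j : (f j <= running_max f j)%nat.
Proof. destruct j; simpl; lia. Qed.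

Lemma running_max_mono f j k : (j <= k)%nat -> (running_max f j <= running_max f k)%nat.
Proof. induction 1; simpl; lia. Qed.

Lemma ulimit_complete : is_complete ulimit_dist.
Proof.
  intros u Hu.
  destruct (choice _ (fun j => Hu _ (pow_half_pos j))) as [Nf HNf].
  set (M := running_max Nf).
  assert (HM : forall j m, (M j <= m)%nat -> ulimit_dist (u m) (u (M j)) < (1/2)^j).
  { intros j m Hm. pose proof (running_max_ge Nf j). apply HNf; unfold M in *; lia. }
  set (xs := fun j => urep (u (M j))).
  assert (Hxs : forall j, udist (xs j) (xs (S j)) < (1/2)^j).
  { intro j. unfold xs. rewrite udist_sym by apply urep_admissible. apply HM.
    apply running_max_mono; lia. }
  destruct (fast_cauchy_udist_limit xs (fun j => urep_admissible _) Hxs) as (y & Hy & HJ).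
  exists (upoint y). intros e He.
  destruct (pow_half_vanishing (e / 3) ltac:(lra)) as [J HJJ]. specialize (HJJ J (le_n J)).
  exists (M J). intros m Hm.
  destruct ulimit_dist_metric as [_ _ Hsym Htri].
  pose proof (Htri (u m) (u (M J)) (upoint y)) as T.
  pose proof (HM J m Hm).
  assert (ulimit_dist (u (M J)) (upoint y) <= 2 * (1/2)^J).
  { rewrite Hsym, ulimit_dist_upoint_l, udist_sym; auto using urep_admissible. apply HJ. }
  lra.
Qed.

Hypothesis Hdbl : is_doubling d.

(* At every scale [n] the doubling property covers the [(r + 2) lam_n]-ball around [q n] by
   [C^k] small balls; read as sequences, their centres form the net, since for [U]-many [n]
   one and the same index serves. *)
Lemma ulimit_ball_net r del : 0 < r -> 0 < del ->
  exists m (ys : nat -> nat -> X), ys O = q /\ (forall i, admissible (ys i)) /\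
    forall w, ulimit_dist ubase w <= r + 1 ->
      exists i, (i < m)%nat /\ ulimit_dist w (upoint (ys i)) < del.
Proof.
  intros Hr Hdel. destruct Hdbl as (C & HC & Hdb).
  destruct (pow_half_vanishing (del / (2 * (r + 2)))) as [k Hk];
    [apply Rdiv_lt_0_compat; lra|].
  specialize (Hk k (le_n k)). rewrite pow_half_inv in Hk.
  set (rho := 2 * (r + 2) / 2 ^ k).
  assert (Hrho : rho < del).
  { apply Rlt_div_iff in Hk; [|lra]. unfold rho, Rdiv. lra. }
  assert (HP : forall n, exists pts : nat -> X,
    (forall i, d (q n) (pts i) <= (r + 2) * lam n) /\
    forall y, d (q n) y <= (r + 2) * lam n ->
      exists i, (i < C ^ k)%nat /\ d y (pts i) <= 2 * ((r + 2) * lam n) / 2 ^ k).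
  { intro n. pose proof (lam_pos n). apply (doubling_ball_net d Hd C HC Hdb k). nra. }
  destruct (choice _ HP) as [pts Hpts].
  set (ys := fun i => match i with O => q | S i' => fun n => pts n i' end).
  assert (Hys : forall i, admissible (ys i)).
  { intros [|i]; [apply admissible_base|]. exists (r + 2). intro n.
    apply Rdiv_le_iff; [apply lam_pos|apply Hpts]. }
  exists (S (C ^ k)), ys. split; [reflexivity|]. split; [exact Hys|].
  intros w Hw. set (y := urep w). assert (Hya : admissible y) by apply urep_admissible.
  rewrite ulimit_dist_base in Hw. fold y in Hw.
  assert (Hnear : U (fun n => sdist q y n < r + 2))
    by (apply udist_lt_eventually; auto using admissible_base; lra).
  assert (Hcov : U (fun n => exists i, (i < C ^ k)%nat /\ sdist y (ys (S i)) n <= rho)).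
  { apply (uf_superset _ HU _ _ Hnear). intros n Hn. pose proof (lam_pos n).
    apply Rdiv_lt_iff in Hn; [|lra].
    destruct (proj2 (Hpts n) (y n) ltac:(lra)) as (i & Hi & Hyi).
    exists i. split; auto. apply Rdiv_le_iff; [lra|]. unfold rho.
    replace (2 * (r + 2) / 2 ^ k * lam n) with (2 * ((r + 2) * lam n) / 2 ^ k)
      by (field; apply pow_nonzero; lra).
    exact Hyi. }
  destruct (uf_exists_lt U HU (fun i n => sdist y (ys (S i)) n <= rho) _ Hcov) as (i & Hi & Hu).
  exists (S i). split; [lia|].
  rewrite ulimit_dist_upoint_r by auto. apply Rle_lt_trans with rho; auto.
  apply udist_le; auto.
Qed.

(* Stage [n] of [pGH_conv] for the rescaled spaces, at radius [r] and precision [del]. *)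
Definition gh_approx (n : nat) (r del : R) : Prop :=
  exists g : X -> ulimit, g (q n) = ubase /\
    (exists s, s < del /\ forall x y, d (q n) x / lam n < r -> d (q n) y / lam n < r ->
        Rabs (d x y / lam n - ulimit_dist (g x) (g y)) <= s) /\
    (forall w, ulimit_dist ubase w < r - del ->
        exists x, d (q n) x / lam n < r /\ ulimit_dist w (g x) < del).

Lemma gh_approx_weaken n r del r' del' : 0 < r -> 0 < del -> r' <= r -> 2 * del <= del' ->
  gh_approx n r del -> gh_approx n r' del'.
Proof.
  intros Hr Hdel Hr' Hdel' (g & Hg1 & (s & Hs & Hg2) & Hg3).
  exists g. split; auto. split.
  - exists s. split; [lra|]. intros x y Hx Hy. apply Hg2; lra.
  - intros w Hw. destruct (Hg3 w ltac:(lra)) as (x & Hx & Hwx). exists x. split; [|lra].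
    destruct ulimit_dist_metric as [_ _ _ Htri].
    assert (Hq : d (q n) (q n) / lam n < r) by (rewrite (met_self d Hd); unfold Rdiv; lra).
    pose proof (Hg2 _ _ Hq Hx) as Hqx. rewrite Hg1 in Hqx.
    pose proof (Htri ubase w (g x)). unfold Rabs in Hqx; destruct Rcase_abs; lra.
Qed.

Lemma net_covers_scaled_ball r e m (ys : nat -> nat -> X) : 0 < r -> (forall i, admissible (ys i)) ->
  (forall w, ulimit_dist ubase w <= r + 1 ->
     exists i, (i < m)%nat /\ ulimit_dist w (upoint (ys i)) < e) ->
  U (fun n => forall y, d (q n) y / lam n < r + 1 ->
       exists i, (i < m)%nat /\ d y (ys i n) / lam n < 2 * e).
Proof.
  intros Hr Hys Hnet.
  set (P := fun n => forall y, d (q n) y / lam n < r + 1 ->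
       exists i, (i < m)%nat /\ d y (ys i n) / lam n < 2 * e).
  destruct (uf_ultra _ HU P) as [h|h]; auto. exfalso.
  assert (Hbad : forall n, exists y, d (q n) y / lam n <= r + 1 /\
    (~ P n -> forall i, (i < m)%nat -> 2 * e <= d y (ys i n) / lam n)).
  { intro n. destruct (classic (P n)) as [Hn|Hn].
    - exists (q n). split; [|tauto]. rewrite (met_self d Hd). unfold Rdiv. lra.
    - apply not_all_ex_not in Hn as [y Hy]. exists y.
      apply imply_to_and in Hy as [Hy1 Hy2]. split; [lra|]. intros _ i Hi.
      apply Rnot_lt_le. intro Hlt. apply Hy2. eauto. }
  destruct (choice _ Hbad) as [yy Hyy].
  assert (Hyya : admissible yy) by (exists (r + 1); intro n; apply Hyy).
  assert (Hball : ulimit_dist ubase (upoint yy) <= r + 1).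
  { unfold ubase. rewrite ulimit_dist_upoint by auto using admissible_base.
    apply udist_le; auto using admissible_base. apply uf_all; auto. intro n; apply Hyy. }
  destruct (Hnet _ Hball) as (i & Hi & Hdi). rewrite ulimit_dist_upoint in Hdi by auto.
  destruct (uf_nonempty _ HU _ (uf_inter _ HU _ _ h (udist_lt_eventually _ _ _ Hyya (Hys i) Hdi)))
    as (n & Hn1 & Hn2).
  pose proof (proj2 (Hyy n) Hn1 i Hi). pose proof (udist_nonneg _ _ Hyya (Hys i)).
  unfold sdist in Hn2. lra.
Qed.

Section NetStage.
Variables (r del : R) (m n : nat) (ys : nat -> nat -> X).
Let e := del / 10.
Hypotheses (Hr : 0 < r) (Hdel : 0 < del).
Hypotheses (Hys0 : ys O = q) (Hys : forall i, admissible (ys i)).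
Hypothesis Hnet : forall w, ulimit_dist ubase w <= r + 1 ->
  exists i, (i < m)%nat /\ ulimit_dist w (upoint (ys i)) < e.
Hypothesis Hclose : forall i, (i < m)%nat -> forall j, (j < m)%nat ->
  Rabs (sdist (ys i) (ys j) n - udist (ys i) (ys j)) < e.
Hypothesis Hcover : forall y, d (q n) y / lam n < r + 1 ->
  exists i, (i < m)%nat /\ d y (ys i n) / lam n < 2 * e.

Lemma ulimit_dist_net i j : ulimit_dist (upoint (ys i)) (upoint (ys j)) = udist (ys i) (ys j).
Proof. apply ulimit_dist_upoint; auto. Qed.

Lemma base_sdist_self : d (q n) (q n) / lam n = 0.
Proof. rewrite (met_self d Hd). unfold Rdiv; ring. Qed.

Lemma net_index_exists : exists idx : X -> nat, idx (q n) = O /\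
  forall y, d (q n) y / lam n < r + 1 -> (idx y < m)%nat /\ d y (ys (idx y) n) / lam n < 2 * e.
Proof.
  assert (Hm : (0 < m)%nat)
    by (destruct (Hcover (q n)) as (i & Hi & _); [rewrite base_sdist_self; lra|lia]).
  assert (Hidx : forall y, exists i, (y = q n -> i = O) /\
    (d (q n) y / lam n < r + 1 -> (i < m)%nat /\ d y (ys i n) / lam n < 2 * e)).
  { intro y. destruct (classic (y = q n)) as [->|Ny].
    - exists O. split; auto. intros _. split; auto. rewrite Hys0, base_sdist_self. unfold e; lra.
    - destruct (classic (d (q n) y / lam n < r + 1)) as [Hy|Hy].
      + destruct (Hcover y Hy) as (i & Hi). exists i. split; [tauto|auto].
      + exists O. split; [tauto|]. intro; contradiction. }
  destruct (choice _ Hidx) as [idx Hidx']. exists idx.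
  split; [apply Hidx'; reflexivity|intro y; apply Hidx'].
Qed.

Section NetMap.
Variable idx : X -> nat.
Hypothesis idx_base : idx (q n) = O.
Hypothesis idx_near : forall y, d (q n) y / lam n < r + 1 ->
  (idx y < m)%nat /\ d y (ys (idx y) n) / lam n < 2 * e.

Lemma net_map_distortion x y : d (q n) x / lam n < r + 1 -> d (q n) y / lam n < r + 1 ->
  Rabs (d x y / lam n - ulimit_dist (upoint (ys (idx x))) (upoint (ys (idx y)))) <= 5 * e.
Proof.
  intros Hx Hy. pose proof (lam_pos n) as Hl.
  destruct (idx_near x Hx) as [Hi Hxi], (idx_near y Hy) as [Hj Hyj].
  rewrite ulimit_dist_net. pose proof (Hclose _ Hi _ Hj) as Hc. unfold sdist in Hc.
  set (x' := ys (idx x) n) in *. set (y' := ys (idx y) n) in *.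
  assert (Rabs (d x y / lam n - d x' y' / lam n) < 4 * e).
  { replace (d x y / lam n - d x' y' / lam n) with ((d x y - d x' y') / lam n) by (field; lra).
    unfold Rdiv at 1. rewrite Rabs_mult, (Rabs_pos_eq (/ lam n))
      by (apply Rlt_le, Rinv_0_lt_compat; lra).
    apply Rle_lt_trans with ((d x x' + d y y') * / lam n).
    - apply Rmult_le_compat_r; [apply Rlt_le, Rinv_0_lt_compat; lra|apply (met_diff_le d Hd)].
    - rewrite Rmult_plus_distr_r. fold (d x x' / lam n) (d y y' / lam n). lra. }
  unfold Rabs in *; repeat destruct Rcase_abs; lra.
Qed.

Lemma net_map_dense w : ulimit_dist ubase w < r - del ->
  exists x, d (q n) x / lam n < r /\ ulimit_dist w (upoint (ys (idx x))) < del.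
Proof.
  intros Hw. destruct (Hnet w ltac:(unfold e; lra)) as (i & Hi & Hwi).
  assert (Hm : (0 < m)%nat)
    by (rewrite <- idx_base; apply idx_near; rewrite base_sdist_self; lra).
  destruct ulimit_dist_metric as [_ _ _ Htri].
  pose proof (Htri ubase w (upoint (ys i))) as T1.
  unfold ubase in T1. rewrite <- Hys0, ulimit_dist_net in T1.
  pose proof (Hclose O Hm i Hi) as H0i. unfold sdist in H0i. rewrite Hys0 in H0i, T1.
  fold ubase in T1.
  assert (Hx : d (q n) (ys i n) / lam n < r - del + 2 * e)
    by (unfold Rabs in H0i; destruct Rcase_abs; lra).
  exists (ys i n). split; [unfold e in Hx; lra|].
  destruct (idx_near (ys i n) ltac:(unfold e in Hx; lra)) as [Hj Hij].
  pose proof (Hclose i Hi _ Hj) as Hc. unfold sdist in Hc.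
  pose proof (Htri w (upoint (ys i)) (upoint (ys (idx (ys i n))))) as T2.
  rewrite ulimit_dist_net in T2.
  unfold Rabs in Hc; destruct Rcase_abs; unfold e in *; lra.
Qed.

End NetMap.

(* Send each point of the scaled [r + 1]-ball to a net point [2e]-close to it. *)
Lemma gh_approx_of_net : gh_approx n r del.
Proof.
  destruct net_index_exists as (idx & Hbase & Hnear).
  exists (fun y => upoint (ys (idx y))). split; [rewrite Hbase, Hys0; reflexivity|]. split.
  - exists (5 * e). split; [unfold e; lra|]. intros x y Hx Hy.
    apply net_map_distortion; auto; lra.
  - apply net_map_dense; auto.
Qed.

End NetStage.

Lemma gh_approx_eventually r del : 0 < r -> 0 < del -> U (fun n => gh_approx n r del).
Proof.
  intros Hr Hdel.
  destruct (ulimit_ball_net r (del / 10) Hr ltac:(lra)) as (m & ys & Hys0 & Hys & Hnet).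
  assert (Hclose : U (fun n => forall i, (i < m)%nat -> forall j, (j < m)%nat ->
    Rabs (sdist (ys i) (ys j) n - udist (ys i) (ys j)) < del / 10)).
  { apply uf_forall_lt; auto. intros i Hi. apply uf_forall_lt; auto. intros j Hj.
    apply udist_spec; auto; lra. }
  pose proof (net_covers_scaled_ball r (del / 10) m ys Hr Hys Hnet) as Hcover.
  apply (uf_superset _ HU _ _ (uf_inter _ HU _ _ Hclose Hcover)). intros n [H1 H2].
  eapply gh_approx_of_net; eauto.
Qed.

Lemma pGH_of_gh_approx (nk : nat -> nat) :
  (forall k, gh_approx (nk k) (INR (S k)) (/ INR (S k))) ->
  pGH_conv (fun k x y => d x y / lam (nk k)) (fun k => q (nk k)) ulimit_dist ubase.
Proof.
  intros Hnk r eps Hr Heps.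
  destruct (INR_unbounded (Rmax r (2 / eps))) as [N HN].
  exists N. intros k Hk.
  assert (HkN : INR N <= INR (S k)) by (apply le_INR; lia).
  assert (HSk : 0 < INR (S k)) by (apply lt_0_INR; lia).
  pose proof (Rmax_l r (2 / eps)). pose proof (Rmax_r r (2 / eps)).
  apply (gh_approx_weaken (nk k) (INR (S k)) (/ INR (S k))); auto; [|lra|].
  - apply Rinv_0_lt_compat; auto.
  - assert (H2 : 2 / eps < INR (S k)) by lra. apply Rdiv_lt_iff in H2; [|lra].
    apply Rlt_le, Rdiv_lt_iff; nra.
Qed.

Lemma ulimit_weak_tangent p : seq_conv (fun a b => Rabs (a - b)) lam 0 -> seq_conv d q p ->
  weak_tangent d p ulimit_dist ubase.
Proof.
  intros Hlam0 Hq.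
  assert (Hgood : forall k, exists n, (k <= n)%nat /\ gh_approx n (INR (S k)) (/ INR (S k))).
  { intro k. assert (Hk : 0 < INR (S k)) by (apply lt_0_INR; lia).
    apply (uf_nonempty _ HU), (uf_inter _ HU); [apply (uf_tail _ HU)|].
    apply gh_approx_eventually; [exact Hk|apply Rinv_0_lt_compat, Hk]. }
  destruct (choice _ Hgood) as [nk Hnk].
  split; [exact ulimit_dist_metric|]. split; [exact ulimit_complete|].
  exists (fun k => lam (nk k)), (fun k => q (nk k)).
  split; [intro; apply lam_pos|].
  split; [apply seq_conv_subseq; [apply Hnk|exact Hlam0]|].
  split; [apply seq_conv_subseq; [apply Hnk|exact Hq]|].
  apply pGH_of_gh_approx. intro k; apply Hnk.
Qed.

End UltraLimit.

Section LimitEmbedding.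
Context {X : Type} (d : X -> X -> R) (Hd : is_metric d).
Variable U : (nat -> Prop) -> Prop.
Hypothesis HU : free_ultrafilter U.
Variable et : R -> R.
Variable h : nat -> X -> X.
Hypothesis h_inj : forall n x y, h n x = h n y -> x = y.
Hypothesis h_qs : forall n, qs_inequality d d et (h n).
Variables a b : X.
Hypothesis Hab : a <> b.

Definition scale (n : nat) : R := d (h n a) (h n b).

Definition orbit (x : X) : nat -> X := fun n => h n x.

Lemma scale_pos n : 0 < scale n.
Proof. apply (met_pos d Hd). intro E. apply Hab, (h_inj n), E. Qed.

Lemma orbit_admissible x : admissible d scale (orbit a) (orbit x).
Proof. exists (et (d a x / d a b)). intro n. apply (h_qs n); auto. Qed.

Let h_dist_le n := qs_inequality_le d d Hd et (h n) (h_inj n) (h_qs n).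

(* [d(h a, h b) <= d(h x, h a) + d(h x, h b)], and both terms are controlled by [d(h x, h z)]. *)
Lemma orbit_sdist_lower x z : x <> z -> forall n,
  1 <= (et (d x a / d x z) + et (d x b / d x z)) * sdist d scale (orbit x) (orbit z) n.
Proof.
  intros Hxz n. pose proof (scale_pos n). unfold sdist, orbit.
  rewrite Rmult_div_assoc. apply Rle_div_iff; [lra|]. rewrite Rmult_1_l. unfold scale.
  pose proof (met_tri d Hd (h n a) (h n x) (h n b)).
  rewrite (met_sym d Hd (h n a) (h n x)) in H0.
  pose proof (h_dist_le n x a z Hxz). pose proof (h_dist_le n x b z Hxz). lra.
Qed.

Definition limit_map (x : X) : ulimit d U scale (orbit a) :=
  upoint d Hd U scale (orbit a) (orbit x).

Lemma limit_map_dist x y : ulimit_dist d U scale (orbit a) (limit_map x) (limit_map y) =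
  udist d U scale (orbit x) (orbit y).
Proof. apply ulimit_dist_upoint; auto using scale_pos, orbit_admissible. Qed.

Lemma limit_map_dist_pos x z : x <> z ->
  0 < ulimit_dist d U scale (orbit a) (limit_map x) (limit_map z).
Proof.
  intros Hxz. rewrite limit_map_dist.
  set (K := et (d x a / d x z) + et (d x b / d x z)).
  assert (H1 : 1 <= K * udist d U scale (orbit x) (orbit z)).
  { apply (ulim_le U HU (fun _ => 1) (fun n => K * sdist d scale (orbit x) (orbit z) n)).
    - apply ulim_const; auto.
    - apply ulim_scal; auto. apply udist_spec with (orbit a); auto using scale_pos, orbit_admissible.
    - apply uf_all; auto. intro n. apply orbit_sdist_lower; auto. }
  pose proof (udist_nonneg d Hd U HU scale scale_pos (orbit a) (orbit x) (orbit z)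
    (orbit_admissible x) (orbit_admissible z)) as H0.
  destruct (Rle_lt_or_eq_dec _ _ H0) as [Hlt|Heq]; auto. rewrite <- Heq in H1. lra.
Qed.

Lemma limit_map_qs : qs_inequality d (ulimit_dist d U scale (orbit a)) et limit_map.
Proof.
  intros x y z Hxz. pose proof (limit_map_dist_pos x z Hxz) as Hp.
  rewrite !limit_map_dist in *. apply Rdiv_le_iff; [exact Hp|].
  apply (ulim_le U HU (sdist d scale (orbit x) (orbit y))
    (fun n => et (d x y / d x z) * sdist d scale (orbit x) (orbit z) n)).
  - apply udist_spec with (orbit a); auto using scale_pos, orbit_admissible.
  - apply ulim_scal; auto. apply udist_spec with (orbit a); auto using scale_pos, orbit_admissible.
  - apply uf_all; auto. intro n. unfold sdist, orbit. rewrite Rmult_div_assoc.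
    unfold Rdiv. apply Rmult_le_compat_r; [apply Rlt_le, Rinv_0_lt_compat, scale_pos|].
    apply h_dist_le; auto.
Qed.

Hypothesis et_le : forall s t, 0 < s -> s <= t -> et s <= et t.
Hypothesis et_pos : forall t, 0 < t -> 0 < et t.
Hypothesis et_vanishing :
  forall e, 0 < e -> exists del, 0 < del /\ forall t, 0 < t < del -> et t < e.

Lemma limit_map_embedding : qs_embedding d (ulimit_dist d U scale (orbit a)) et limit_map.
Proof.
  apply qs_embedding_of_inequality; auto.
  - apply ulimit_dist_metric; auto using scale_pos.
  - intro x. destruct (classic (x = a)) as [->|N]; [exists b|exists a]; auto.
  - intros x y E. apply NNPP; intro N. pose proof (limit_map_dist_pos x y N) as Hp.
    rewrite E, (met_self _ (ulimit_dist_metric d Hd U HU scale scale_pos (orbit a))) in Hp. lra.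
  - apply limit_map_qs.
Qed.

End LimitEmbedding.

Lemma subsingleton_qs_tangent {X : Type} (d : X -> X -> R) (Hd : is_metric d) (p : X)
  (et : R -> R) : (forall x y : X, x = y) ->
  exists (Z : Type) (dZ : Z -> Z -> R) (z : Z),
    weak_tangent d p dZ z /\ exists f : X -> Z, qs_embedding d dZ et f.
Proof.
  intros Hsub. assert (Hd0 : forall x y, d x y = 0) by (intros x y; rewrite (Hsub x y); apply met_self, Hd).
  exists unit, (fun _ _ => 0), tt. split; [split; [|split]|].
  - constructor; intros; try lra. destruct x, y; split; auto.
  - intros u _. exists tt. intros e He. exists O. intros; lra.
  - exists (fun n => (1/2)^n), (fun _ => p). split; [intro; apply pow_half_pos|].
    split; [|split].
    + intros e He. destruct (pow_half_vanishing e He) as [N HN]. exists N. intros n Hn.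
      rewrite Rminus_0_r, Rabs_pos_eq by apply Rlt_le, pow_half_pos. auto.
    + intros e He. exists O. intros. rewrite Hd0. auto.
    + intros r eps Hr Heps. exists O. intros n _. exists (fun _ => tt). split; auto. split.
      * exists 0. split; auto. intros x y _ _. rewrite Hd0. unfold Rdiv.
        rewrite Rmult_0_l, Rminus_0_r, Rabs_R0. lra.
      * intros w Hw. exists p. rewrite Hd0. unfold Rdiv. split; lra.
  - exists (fun _ => tt). split; [split; [|split]|].
    + intros x y _. apply Hsub.
    + intros x e He. exists 1. split; [lra|]. intros; lra.
    + intros x e He. exists 1. split; [lra|]. intros y _. rewrite Hd0. auto.
    + intros x y z Hxz. exfalso. apply Hxz, Hsub.
Qed.

Lemma shrinking_qs_maps {X : Type} (d : X -> X -> R) (Hd : is_metric d)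
  (eta etainv : R -> R) (Heta : homeo_nonneg_pair eta etainv) (pn : nat -> X) :
  (forall n, self_qs_at d eta (pn n)) ->
  exists h : nat -> X -> X, (forall n y, d (pn n) (h n y) < (1/2)^n) /\
    (forall n y y', h n y = h n y' -> y = y') /\
    (forall n, qs_inequality d d (eta_prime etainv) (h n)).
Proof.
  intros Hself.
  destruct (choice _ (fun n => self_qs_inverse d Hd eta etainv Heta (pn n) (Hself n) _ (pow_half_pos n)))
    as [h Hh].
  exists h. split; [|split]; intro n; apply Hh.
Qed.

Section ShrinkingMaps.
Context {X : Type} (d : X -> X -> R) (Hd : is_metric d).
Variables (pn : nat -> X) (p : X) (h : nat -> X -> X).
Hypothesis Hpn : seq_conv d pn p.
Hypothesis h_close : forall n y, d (pn n) (h n y) < (1/2)^n.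

Lemma shrinking_orbit_conv x : seq_conv d (fun n => h n x) p.
Proof.
  intros e He. destruct (pow_half_vanishing (e / 2) ltac:(lra)) as [N HN].
  destruct (Hpn (e / 2) ltac:(lra)) as [N1 HN1]. exists (Nat.max N N1). intros n Hn.
  pose proof (HN n ltac:(lia)). pose proof (HN1 n ltac:(lia)). pose proof (h_close n x).
  pose proof (met_tri d Hd (h n x) (pn n) p). rewrite (met_sym d Hd (h n x) (pn n)) in *. lra.
Qed.

Lemma shrinking_scale_vanishing a b :
  seq_conv (fun s t => Rabs (s - t)) (fun n => d (h n a) (h n b)) 0.
Proof.
  intros e He. destruct (pow_half_vanishing (e / 2) ltac:(lra)) as [N HN].
  exists N. intros n Hn. rewrite Rminus_0_r, Rabs_pos_eq by apply (met_nonneg d Hd).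
  pose proof (HN n Hn). pose proof (h_close n a). pose proof (h_close n b).
  pose proof (met_tri d Hd (h n a) (pn n) (h n b)). rewrite (met_sym d Hd (h n a) (pn n)) in *. lra.
Qed.

End ShrinkingMaps.

Theorem theorem1p2 (X : Type) (d : X -> X -> R) (p : X) (eta etainv : R -> R)
  (pn : nat -> X) :
  is_metric d -> is_proper d -> is_doubling d ->
  homeo_nonneg_pair eta etainv ->
  seq_conv d pn p ->
  (forall n, self_qs_at d eta (pn n)) ->
  exists (Z : Type) (dZ : Z -> Z -> R) (z : Z),
    weak_tangent d p dZ z /\
    exists f : X -> Z, qs_embedding d dZ (eta_prime etainv) f.
Proof.
  intros Hd _ Hdbl Heta Hpn Hself.
  destruct (classic (exists a b : X, a <> b)) as [(a & b & Hab)|Hsub].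
  2:{ apply subsingleton_qs_tangent; auto.
      intros x y. apply NNPP; intro N. apply Hsub; eauto. }
  destruct (shrinking_qs_maps d Hd eta etainv Heta pn Hself) as (h & Hclose & Hinj & Hqs).
  destruct free_ultrafilter_exists as [U HU].
  set (lam := scale d h a b). set (q := orbit h a).
  exists (ulimit d U lam q), (ulimit_dist d U lam q), (ubase d Hd U lam q). split.
  - apply ulimit_weak_tangent; auto.
    + apply scale_pos; auto.
    + apply (shrinking_scale_vanishing d Hd pn h Hclose).
    + apply (shrinking_orbit_conv d Hd pn p h Hpn Hclose).
  - exists (limit_map d Hd U h a b).
    apply limit_map_embedding; auto.
    + apply (eta_prime_le eta etainv Heta).
    + apply (eta_prime_pos eta etainv Heta).
    + apply (eta_prime_vanishing eta etainv Heta).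
Qed.
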